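(* For an integer $d\geqslant 1$ and a real $x>0$, let $$W_d(x)=\sum_{\substack{n\geqslant 1\\ \lfloor x/n\rfloor-\lfloor x/(n+1)\rfloor=d}}\bigl\lvert \{x/(n+1)\}-\{x/n\}\bigr\rvert ,$$ and let $$f(d)=\frac{8d+2}3\sqrt{d+1}-\frac{8d-2}3\sqrt{d-1}-4\sqrt{d}.$$ Then for all integers $d>0$ and reals $x>0$, $$W_d(x)=f(d)\sqrt{x}+O(d),$$ with an absolute implied constant.
   Context: For a real number $t$, $\lfloor t\rfloor$ denotes its integer part and $\{t\}=t-\lfloor t\rfloor$ its fractional part. *)

From Stdlib Require Import Reals Lra ZArith.
Open Scope R_scope.

(* floor and fractional part: Stdlib's Int_part t = floor t, frac_part t = t - floor t *)
Definition floorR (t : R) : Z := Int_part t.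
Definition fracR (t : R) : R := frac_part t.

Definition W_term (d : nat) (x : R) (n : nat) : R :=
  if Z.eq_dec (floorR (x / INR n) - floorR (x / INR (S n)))%Z (Z.of_nat d)
  then Rabs (fracR (x / INR (S n)) - fracR (x / INR n))
  else 0.

(* For n > x both floors vanish, so (d >= 1) only n <= floor x + 1 can
   contribute; we sum n = 1 .. floor(x) + 1 (sum_f_R0 f N = f 0 + ... + f N). *)
Definition W (d : nat) (x : R) : R :=
  sum_f_R0 (fun k => W_term d x (S k)) (Z.to_nat (floorR x)).

Definition fconst (d : nat) : R :=
  (8 * INR d + 2) / 3 * sqrt (INR d + 1)
  - (8 * INR d - 2) / 3 * sqrt (INR d - 1)
  - 4 * sqrt (INR d).

From Stdlib Require Import Reals Lra Lia Psatz ZArith.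
From Coquelicot Require Import Coquelicot.
Set Bullet Behavior "Strict Subproofs".
Open Scope R_scope.

(* Write t_n = x/n - x/(n+1) - d and r_n = {x/n} - {x/(n+1)}.  The n-th summand of
   W_d(x) equals h(t_n) + g(t_n) r_n, where h(t) = |c| - c^2 for c the clamp of t to
   [-1, 1], and g(t) = t on (-1, 1), 0 elsewhere.  The t_n decrease and the partial sums
   of r_n telescope to a difference of fractional parts, so by Abel summation the
   g-part is O(1).  The h-part is a Riemann sum with unit steps of u |-> h(x/u^2 - d),
   with error at most the total variation of the clamp.  That function has an explicit
   piecewise polynomial primitive in u, with knots sqrt(x/(d+1)), sqrt(x/d),
   sqrt(x/(d-1)), whose total increase is f(d) sqrt x; the comparison with the primitive
   only needs the mean value theorem on each piece.  The error is in fact O(1). *)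

Definition clamp1 (t : R) : R := Rmax (-1) (Rmin 1 t).
Definition hump (t : R) : R := Rabs (clamp1 t) - clamp1 t * clamp1 t.
Definition ind_ge1 (t : R) : R := if Rle_dec 1 t then 1 else 0.
Definition ind_le_m1 (t : R) : R := if Rle_dec t (-1) then 1 else 0.

Lemma clamp1_bounds t : -1 <= clamp1 t <= 1.
Proof. unfold clamp1, Rmax, Rmin; repeat destruct Rle_dec; lra. Qed.

Lemma clamp1_le s t : s <= t -> clamp1 s <= clamp1 t.
Proof. intros; unfold clamp1, Rmax, Rmin; repeat destruct Rle_dec; lra. Qed.

Lemma clamp1_id t : -1 <= t <= 1 -> clamp1 t = t.
Proof. intros; unfold clamp1, Rmax, Rmin; repeat destruct Rle_dec; lra. Qed.

Lemma clamp1_ge1 t : 1 <= t -> clamp1 t = 1.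
Proof. intros; unfold clamp1, Rmax, Rmin; repeat destruct Rle_dec; lra. Qed.

Lemma clamp1_le_m1 t : t <= -1 -> clamp1 t = -1.
Proof. intros; unfold clamp1, Rmax, Rmin; repeat destruct Rle_dec; lra. Qed.

Lemma hump_lipschitz s t : Rabs (hump s - hump t) <= Rabs (clamp1 s - clamp1 t).
Proof.
  unfold hump. pose proof (clamp1_bounds s); pose proof (clamp1_bounds t).
  set (a := clamp1 s) in *; set (b := clamp1 t) in *.
  unfold Rabs; repeat destruct Rcase_abs; nra.
Qed.

Lemma hump_bounds t : 0 <= hump t <= 1/4.
Proof.
  unfold hump. pose proof (clamp1_bounds t). set (a := clamp1 t) in *.
  pose proof (pow2_ge_0 (a + 1/2)); pose proof (pow2_ge_0 (a - 1/2)).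
  unfold Rabs; destruct Rcase_abs; simpl in *; split; nra.
Qed.

Lemma hump_ge1 t : 1 <= t -> hump t = 0.
Proof. intros; unfold hump; rewrite clamp1_ge1, Rabs_R1 by lra; ring. Qed.

Lemma hump_le_m1 t : t <= -1 -> hump t = 0.
Proof.
  intros; unfold hump; rewrite clamp1_le_m1 by lra; unfold Rabs; destruct Rcase_abs; lra.
Qed.

Lemma hump_nonneg t : 0 <= t <= 1 -> hump t = t - t * t.
Proof. intros; unfold hump; rewrite clamp1_id, Rabs_right by lra; ring. Qed.

Lemma hump_nonpos t : -1 <= t <= 0 -> hump t = - t - t * t.
Proof. intros; unfold hump; rewrite clamp1_id, Rabs_left1 by lra; ring. Qed.

Lemma hump_weight_identity (t : R) (k : Z) : Rabs (t - IZR k) < 1 ->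
  (if Z.eq_dec k 0 then Rabs t else 0)
  = hump t + (clamp1 t - ind_ge1 t + ind_le_m1 t) * (t - IZR k).
Proof.
  intros Hk; apply Rabs_def2 in Hk. unfold ind_ge1, ind_le_m1.
  destruct (Rle_dec 1 t) as [H1|H1].
  - rewrite hump_ge1, clamp1_ge1 by lra. destruct Rle_dec; [lra|].
    destruct Z.eq_dec as [->|]; [simpl in Hk; lra | ring].
  - destruct (Rle_dec t (-1)) as [H2|H2].
    + rewrite hump_le_m1, clamp1_le_m1 by lra.
      destruct Z.eq_dec as [->|]; [simpl in Hk; lra | ring].
    + rewrite clamp1_id by lra. unfold hump; rewrite clamp1_id by lra.
      destruct Z.eq_dec as [->|Hk0]; [simpl; ring|].
      assert (k = 1%Z \/ k = (-1)%Z) as [->| ->].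
      { assert (-2 < k < 2)%Z by (split; apply lt_IZR; simpl; lra). lia. }
      * rewrite Rabs_right by (simpl in Hk; lra). simpl; ring.
      * rewrite Rabs_left by (simpl in Hk; lra). simpl; ring.
Qed.

Lemma fracR_bounds t : 0 <= fracR t < 1.
Proof. unfold fracR, frac_part. pose proof (base_Int_part t). lra. Qed.

Lemma floor_gap_summand (d : nat) (a b : R) :
  (if Z.eq_dec (floorR a - floorR b)%Z (Z.of_nat d)
   then Rabs (fracR b - fracR a) else 0)
  = hump (a - b - INR d)
    + (clamp1 (a - b - INR d) - ind_ge1 (a - b - INR d) + ind_le_m1 (a - b - INR d))
      * (fracR a - fracR b).
Proof.
  set (k := (floorR a - floorR b - Z.of_nat d)%Z).
  assert (Hr : fracR a - fracR b = a - b - INR d - IZR k).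
  { unfold k, fracR, frac_part, floorR. rewrite !minus_IZR, <- INR_IZR_INZ. ring. }
  assert (Hk : Rabs (a - b - INR d - IZR k) < 1).
  { rewrite <- Hr. pose proof (fracR_bounds a); pose proof (fracR_bounds b).
    apply Rabs_def1; lra. }
  rewrite Hr, <- (hump_weight_identity _ _ Hk).
  rewrite <- Rabs_Ropp, Ropp_minus_distr, Hr.
  destruct Z.eq_dec, Z.eq_dec as [Hk0|]; try (unfold k in *; lia); [|reflexivity].
  rewrite Hk0; f_equal; simpl; ring.
Qed.

Lemma sum_f_R0_telescope (w : nat -> R) (N : nat) :
  sum_f_R0 (fun k => w k - w (S k)) N = w 0%nat - w (S N).
Proof. induction N as [|N IH]; simpl; [|rewrite IH]; ring. Qed.

Lemma sum_f_R0_by_parts (w r : nat -> R) (N : nat) :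
  sum_f_R0 (fun k => w k * r k) N =
  w (S N) * sum_f_R0 r N + sum_f_R0 (fun k => (w k - w (S k)) * sum_f_R0 r k) N.
Proof. induction N as [|N IH]; simpl; [|rewrite IH; simpl]; ring. Qed.

Lemma abel_bound (w r : nat -> R) (N : nat) :
  (forall n, w (S n) <= w n) -> (forall n, Rabs (w n) <= 1) ->
  (forall n, Rabs (sum_f_R0 r n) <= 1) ->
  Rabs (sum_f_R0 (fun k => w k * r k) N) <= 3.
Proof.
  intros Hdec Hw Hr. rewrite sum_f_R0_by_parts.
  assert (Hvar : Rabs (sum_f_R0 (fun k => (w k - w (S k)) * sum_f_R0 r k) N)
                 <= w 0%nat - w (S N)).
  { rewrite <- sum_f_R0_telescope.
    eapply Rle_trans; [apply Rsum_abs|]. apply sum_Rle. intros n _.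
    rewrite Rabs_mult, (Rabs_right (w n - w (S n))) by (specialize (Hdec n); lra).
    pose proof (Hdec n); pose proof (Hr n). nra. }
  assert (Hlast : Rabs (w (S N) * sum_f_R0 r N) <= 1).
  { rewrite Rabs_mult. pose proof (Hw (S N)); pose proof (Hr N).
    pose proof (Rabs_pos (w (S N))); pose proof (Rabs_pos (sum_f_R0 r N)). nra. }
  pose proof (proj1 (Rabs_le_between _ _) (Hw 0%nat)).
  pose proof (proj1 (Rabs_le_between _ _) (Hw (S N))).
  eapply Rle_trans; [apply Rabs_triang|]. lra.
Qed.

Definition gap (d : nat) (x : R) (n : nat) : R := x / INR n - x / INR (S n) - INR d.
Definition frac_drop (x : R) (n : nat) : R := fracR (x / INR n) - fracR (x / INR (S n)).

Lemma W_term_decomposition d x n :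
  W_term d x n = hump (gap d x n)
    + (clamp1 (gap d x n) - ind_ge1 (gap d x n) + ind_le_m1 (gap d x n)) * frac_drop x n.
Proof. apply floor_gap_summand. Qed.

Lemma gap_succ d x k : gap d x (S k) = x / ((INR k + 1) * (INR k + 2)) - INR d.
Proof.
  unfold gap. rewrite !S_INR. pose proof (pos_INR k). field. split; lra.
Qed.

Lemma gap_decreasing d x k : 0 < x -> gap d x (S (S k)) <= gap d x (S k).
Proof.
  intros Hx. rewrite !gap_succ, S_INR. pose proof (pos_INR k).
  apply Rplus_le_compat_r, Rmult_le_compat_l; [lra|]. apply Rinv_le_contravar; nra.
Qed.

Lemma frac_drop_partial_sum_bound x N : Rabs (sum_f_R0 (fun k => frac_drop x (S k)) N) <= 1.
Proof.
  rewrite (sum_f_R0_telescope (fun k => fracR (x / INR (S k)))).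
  pose proof (fracR_bounds (x / INR 1)); pose proof (fracR_bounds (x / INR (S (S N)))).
  apply Rabs_le; lra.
Qed.

Lemma monotone_weighted_frac_drop_bound (f : R -> R) d x N : 0 < x ->
  (forall s t, s <= t -> f s <= f t) -> (forall t, Rabs (f t) <= 1) ->
  Rabs (sum_f_R0 (fun k => f (gap d x (S k)) * frac_drop x (S k)) N) <= 3.
Proof.
  intros Hx Hf Hb. apply (abel_bound (fun k => f (gap d x (S k)))); auto.
  - intros n; apply Hf, gap_decreasing, Hx.
  - apply frac_drop_partial_sum_bound.
Qed.

Lemma W_sum_sub_hump_sum_bound d x N : 0 < x ->
  Rabs (sum_f_R0 (fun k => W_term d x (S k)) N
        - sum_f_R0 (fun k => hump (gap d x (S k))) N) <= 9.
Proof.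
  intros Hx.
  set (weighted f := sum_f_R0 (fun k => f (gap d x (S k)) * frac_drop x (S k)) N).
  assert (E : sum_f_R0 (fun k => W_term d x (S k)) N
              - sum_f_R0 (fun k => hump (gap d x (S k))) N
            = weighted clamp1 - weighted ind_ge1 - weighted (fun t => - ind_le_m1 t)).
  { unfold weighted. rewrite <- !minus_sum. apply sum_eq; intros k _.
    rewrite W_term_decomposition. ring. }
  assert (B1 : Rabs (weighted clamp1) <= 3).
  { apply monotone_weighted_frac_drop_bound; [exact Hx | exact clamp1_le |].
    intros t; apply Rabs_le, clamp1_bounds. }
  assert (B2 : Rabs (weighted ind_ge1) <= 3).
  { apply monotone_weighted_frac_drop_bound; [exact Hx | |];
      intros; unfold ind_ge1; repeat destruct Rle_dec; try apply Rabs_le; lra. }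
  assert (B3 : Rabs (weighted (fun t => - ind_le_m1 t)) <= 3).
  { apply monotone_weighted_frac_drop_bound; [exact Hx | |];
      intros; unfold ind_le_m1; repeat destruct Rle_dec; try apply Rabs_le; lra. }
  rewrite E. apply Rabs_le.
  apply Rabs_le_between in B1, B2, B3. lra.
Qed.

(* An integral-free way of saying that [P] is a primitive of [k] on [a, b]. *)
Definition mean_value_bounded (P k : R -> R) (a b : R) : Prop :=
  forall m M, (forall u, a <= u <= b -> m <= k u <= M) ->
  m * (b - a) <= P b - P a <= M * (b - a).

Lemma mean_value_bounded_glue P k a c b : a <= c <= b ->
  mean_value_bounded P k a c -> mean_value_bounded P k c b -> mean_value_bounded P k a b.
Proof.
  intros Hc Hac Hcb m M Hk.
  pose proof (Hac m M (fun u Hu => Hk u ltac:(lra))).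
  pose proof (Hcb m M (fun u Hu => Hk u ltac:(lra))). nra.
Qed.

Lemma mean_value_bounded_split P k c (L U : R -> Prop) :
  (forall a b, L a -> a <= b <= c -> mean_value_bounded P k a b) ->
  (forall a b, c <= a <= b -> U b -> mean_value_bounded P k a b) ->
  forall a b, L a -> a <= b -> U b -> mean_value_bounded P k a b.
Proof.
  intros Hleft Hright a b La Hab Ub.
  destruct (Rle_dec b c); [now apply Hleft|].
  destruct (Rle_dec c a); [apply Hright; auto; lra|].
  apply (mean_value_bounded_glue _ _ a c b); [lra | apply Hleft | apply Hright]; auto; lra.
Qed.

Lemma mean_value_bounded_primitive P k F c a b : a <= b ->
  (forall u, a <= u <= b -> derivable_pt_lim F u (k u)) ->
  (forall u, a <= u <= b -> P u = F u + c) -> mean_value_bounded P k a b.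
Proof.
  intros Hab HF HP m M Hk. destruct (Req_dec a b) as [<-|Hne].
  - rewrite !Rminus_diag, !Rmult_0_r. lra.
  - destruct (MVT_cor2 F k a b ltac:(lra) HF) as [v [Hv Hv_in]].
    rewrite (HP b), (HP a) by lra.
    replace (F b + c - (F a + c)) with (F b - F a) by ring. rewrite Hv.
    destruct (Hk v ltac:(lra)). split; apply Rmult_le_compat_r; lra.
Qed.

Definition hump_profile (d : nat) (x u : R) : R := hump (x / (u * u) - INR d).

Definition antider_pos (d : nat) (x u : R) : R :=
  - (1 + 2 * INR d) * x / u + x * x / (3 * (u * u * u)) - (INR d + INR d * INR d) * u.
Definition antider_neg (d : nat) (x u : R) : R :=
  - (2 * INR d - 1) * x / u + x * x / (3 * (u * u * u)) + (INR d - INR d * INR d) * u.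

Lemma derivable_antider_pos d x u : 0 < u ->
  derivable_pt_lim (antider_pos d x) u
    ((x / (u * u) - INR d) - (x / (u * u) - INR d) * (x / (u * u) - INR d)).
Proof.
  intros Hu. apply is_derive_Reals. unfold antider_pos. auto_derive.
  - assert (0 < u * u * u) by (apply Rmult_lt_0_compat; nra). repeat split; lra.
  - field. lra.
Qed.

Lemma derivable_antider_neg d x u : 0 < u ->
  derivable_pt_lim (antider_neg d x) u
    (- (x / (u * u) - INR d) - (x / (u * u) - INR d) * (x / (u * u) - INR d)).
Proof.
  intros Hu. apply is_derive_Reals. unfold antider_neg. auto_derive.
  - assert (0 < u * u * u) by (apply Rmult_lt_0_compat; nra). repeat split; lra.
  - field. lra.
Qed.

Lemma le_div_sq_of_le_sqrt x c u : 0 < x -> 0 < c -> 0 < u ->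
  u <= sqrt (x / c) -> c <= x / (u * u).
Proof.
  intros Hx Hc Hu H. apply Rle_div_r; [nra|].
  assert (u * u <= x / c).
  { rewrite <- (sqrt_sqrt (x / c)) by (apply Rlt_le, Rdiv_lt_0_compat; lra). nra. }
  apply (Rmult_le_compat_l c) in H0; [|lra].
  replace (c * (x / c)) with x in H0 by (field; lra). lra.
Qed.

Lemma div_sq_le_of_sqrt_le x c u : 0 < x -> 0 < c -> 0 < u ->
  sqrt (x / c) <= u -> x / (u * u) <= c.
Proof.
  intros Hx Hc Hu H. apply Rle_div_l; [nra|].
  assert (x / c <= u * u).
  { rewrite <- (sqrt_sqrt (x / c)) by (apply Rlt_le, Rdiv_lt_0_compat; lra).
    pose proof (sqrt_pos (x / c)). nra. }
  apply (Rmult_le_compat_l c) in H0; [|lra].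
  replace (c * (x / c)) with x in H0 by (field; lra). lra.
Qed.

Lemma sqrt_div_lt x c c' : 0 < x -> 0 < c < c' -> sqrt (x / c') < sqrt (x / c).
Proof.
  intros Hx Hc. apply sqrt_lt_1_alt. split.
  - apply Rlt_le, Rdiv_lt_0_compat; lra.
  - apply Rmult_lt_compat_l; [lra|]. apply Rinv_lt_contravar; nra.
Qed.


Lemma antider_pos_at x r s d : 0 < r -> 0 < s -> r * r = x -> s * s = INR d + 1 ->
  antider_pos d x (r / s) = - r * s * (8 * INR d + 2) / 3.
Proof.
  intros. unfold antider_pos. replace (INR d) with (s * s - 1) by lra. subst x. field. lra.
Qed.

Lemma antider_pos_sub_neg_at x r s d : 0 < r -> 0 < s -> r * r = x -> s * s = INR d ->
  antider_pos d x (r / s) - antider_neg d x (r / s) = - 4 * r * s.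
Proof.
  intros. unfold antider_pos, antider_neg. replace (INR d) with (s * s) by lra. subst x.
  field. lra.
Qed.

Lemma antider_neg_at x r s d : 0 < r -> 0 < s -> r * r = x -> s * s = INR d - 1 ->
  antider_neg d x (r / s) = - r * s * (8 * INR d - 2) / 3.
Proof.
  intros. unfold antider_neg. replace (INR d) with (s * s + 1) by lra. subst x. field. lra.
Qed.

Lemma antider_neg_1_bound x y : 0 < x -> x <= y -> 1 <= y -> Rabs (antider_neg 1 x y) <= 1.
Proof.
  intros Hx Hxy Hy. unfold antider_neg. simpl INR.
  set (r := x / y). set (iy := / y).
  assert (Hr : 0 < r <= 1).
  { unfold r. split; [apply Rdiv_lt_0_compat; lra|]. apply Rle_div_l; lra. }
  assert (Hiy : 0 < iy <= 1).
  { unfold iy. split; [apply Rinv_0_lt_compat; lra|].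
    rewrite <- Rinv_1. apply Rinv_le_contravar; lra. }
  replace (- (2 * 1 - 1) * x / y + x * x / (3 * (y * y * y)) + (1 - 1 * 1) * y)
    with (- r + r * r * iy / 3) by (unfold r, iy; field; lra).
  assert (0 <= r * r * iy <= 1) by (split; [apply Rmult_le_pos; nra | nra]).
  apply Rabs_le; lra.
Qed.

Section Primitive.
Variables (d : nat) (x : R).
Hypotheses (Hd : (1 <= d)%nat) (Hx : 0 < x).

Definition knot1 : R := sqrt (x / (INR d + 1)).
Definition knot2 : R := sqrt (x / INR d).
Definition knot3 : R := sqrt (x / (INR d - 1)).

(* For [d = 1], [knot3] is junk: [hump_profile] stays positive up to infinity. *)
Definition hump_primitive (u : R) : R :=
  if Rle_dec u knot1 then 0
  else if Rle_dec u knot2 then antider_pos d x u - antider_pos d x knot1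
  else antider_pos d x knot2 - antider_pos d x knot1
       + antider_neg d x (if le_dec 2 d then Rmin u knot3 else u) - antider_neg d x knot2.

Lemma INR_d_ge1 : 1 <= INR d.
Proof. apply (le_INR 1); lia. Qed.

Lemma INR_d_ge2 : (2 <= d)%nat -> 2 <= INR d.
Proof. intros; apply (le_INR 2); lia. Qed.

Lemma knot1_pos : 0 < knot1.
Proof. pose proof INR_d_ge1. apply sqrt_lt_R0, Rdiv_lt_0_compat; lra. Qed.

Lemma knot1_lt_knot2 : knot1 < knot2.
Proof. pose proof INR_d_ge1. apply sqrt_div_lt; lra. Qed.

Lemma knot2_lt_knot3 : (2 <= d)%nat -> knot2 < knot3.
Proof. intros H2; pose proof (INR_d_ge2 H2). apply sqrt_div_lt; lra. Qed.

Lemma hump_primitive_low u : u <= knot1 -> hump_primitive u = 0.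
Proof. intros; unfold hump_primitive; destruct Rle_dec; lra. Qed.

Lemma hump_primitive_mid u : knot1 <= u <= knot2 ->
  hump_primitive u = antider_pos d x u - antider_pos d x knot1.
Proof.
  intros Hu; unfold hump_primitive. destruct Rle_dec; [replace u with knot1 by lra; ring|].
  destruct Rle_dec; lra.
Qed.

Lemma hump_primitive_high u : knot2 <= u ->
  hump_primitive u = antider_pos d x knot2 - antider_pos d x knot1
    + antider_neg d x (if le_dec 2 d then Rmin u knot3 else u) - antider_neg d x knot2.
Proof.
  intros Hu; pose proof knot1_lt_knot2. unfold hump_primitive.
  destruct Rle_dec; [lra|]. destruct Rle_dec; [|reflexivity].
  replace u with knot2 by lra. destruct le_dec as [H2|]; [|ring].
  rewrite Rmin_left by (pose proof (knot2_lt_knot3 H2); lra). ring.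
Qed.

Lemma mean_value_bounded_low a b : 0 < a -> a <= b <= knot1 ->
  mean_value_bounded hump_primitive (hump_profile d x) a b.
Proof.
  intros Ha Hab. apply (mean_value_bounded_primitive _ _ (fun _ => 0) 0); [lra| |].
  - intros u Hu. replace (hump_profile d x u) with 0; [apply derivable_pt_lim_const|].
    pose proof INR_d_ge1. symmetry; apply hump_ge1.
    enough (INR d + 1 <= x / (u * u)) by lra.
    apply le_div_sq_of_le_sqrt; unfold knot1, knot2, knot3 in *; lra.
  - intros u Hu. rewrite hump_primitive_low by lra. ring.
Qed.

Lemma mean_value_bounded_mid a b : knot1 <= a -> a <= b <= knot2 ->
  mean_value_bounded hump_primitive (hump_profile d x) a b.
Proof.
  intros Ha Hab. pose proof knot1_pos. pose proof INR_d_ge1.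
  apply (mean_value_bounded_primitive _ _ (antider_pos d x) (- antider_pos d x knot1));
    [lra| |].
  - intros u Hu. unfold hump_profile. rewrite hump_nonneg.
    + apply derivable_antider_pos; lra.
    + enough (INR d <= x / (u * u) <= INR d + 1) by lra. split.
      * apply le_div_sq_of_le_sqrt; unfold knot1, knot2, knot3 in *; lra.
      * apply div_sq_le_of_sqrt_le; unfold knot1, knot2, knot3 in *; lra.
  - intros u Hu. rewrite hump_primitive_mid by lra. ring.
Qed.

Lemma mean_value_bounded_high a b : knot2 <= a -> a <= b ->
  ((2 <= d)%nat -> b <= knot3) ->
  mean_value_bounded hump_primitive (hump_profile d x) a b.
Proof.
  intros Ha Hab Hb. pose proof knot1_pos. pose proof knot1_lt_knot2. pose proof INR_d_ge1.
  apply (mean_value_bounded_primitive _ _ (antider_neg d x)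
           (antider_pos d x knot2 - antider_pos d x knot1 - antider_neg d x knot2));
    [lra| |].
  - intros u Hu. unfold hump_profile. rewrite hump_nonpos.
    + apply derivable_antider_neg; lra.
    + enough (INR d - 1 <= x / (u * u) <= INR d) by lra. split.
      * destruct (le_dec 2 d) as [H2|H2].
        -- pose proof (INR_d_ge2 H2). specialize (Hb H2).
           apply le_div_sq_of_le_sqrt; unfold knot1, knot2, knot3 in *; lra.
        -- replace d with 1%nat by lia. simpl.
           assert (0 < x / (u * u)) by (apply Rdiv_lt_0_compat; nra). lra.
      * apply div_sq_le_of_sqrt_le; unfold knot1, knot2, knot3 in *; lra.
  - intros u Hu. rewrite hump_primitive_high by lra.
    destruct le_dec as [H2|]; [rewrite Rmin_left by (specialize (Hb H2); lra)|]; ring.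
Qed.

Lemma mean_value_bounded_top a b : (2 <= d)%nat -> knot3 <= a -> a <= b ->
  mean_value_bounded hump_primitive (hump_profile d x) a b.
Proof.
  intros H2 Ha Hab. pose proof knot1_pos. pose proof knot1_lt_knot2.
  pose proof (knot2_lt_knot3 H2). pose proof (INR_d_ge2 H2).
  apply (mean_value_bounded_primitive _ _ (fun _ => 0) (hump_primitive knot3)); [lra| |].
  - intros u Hu. replace (hump_profile d x u) with 0; [apply derivable_pt_lim_const|].
    symmetry; apply hump_le_m1.
    enough (x / (u * u) <= INR d - 1) by lra.
    apply div_sq_le_of_sqrt_le; unfold knot1, knot2, knot3 in *; lra.
  - intros u Hu. rewrite !hump_primitive_high by lra.
    destruct le_dec; [|lia]. rewrite !Rmin_right by lra. ring.
Qed.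

Lemma mean_value_bounded_hump_primitive a b : 0 < a -> a <= b ->
  mean_value_bounded hump_primitive (hump_profile d x) a b.
Proof.
  intros Ha Hab. pose proof knot1_lt_knot2.
  assert (Hlow2 : forall a b, 0 < a -> a <= b -> b <= knot2 ->
            mean_value_bounded hump_primitive (hump_profile d x) a b).
  { apply (mean_value_bounded_split _ _ knot1).
    - intros; apply mean_value_bounded_low; tauto.
    - intros; apply mean_value_bounded_mid; tauto. }
  destruct (le_dec 2 d) as [H2|H2].
  - pose proof (knot2_lt_knot3 H2).
    assert (Hlow3 : forall a b, 0 < a -> a <= b -> b <= knot3 ->
              mean_value_bounded hump_primitive (hump_profile d x) a b).
    { apply (mean_value_bounded_split _ _ knot2); [intros; apply Hlow2; tauto|].
      intros; apply mean_value_bounded_high; tauto. }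
    apply (mean_value_bounded_split _ _ knot3 (Rlt 0) (fun _ => True)); auto.
    + intros; apply Hlow3; tauto.
    + intros; apply mean_value_bounded_top; tauto.
  - apply (mean_value_bounded_split _ _ knot2 (Rlt 0) (fun _ => True)); auto.
    + intros; apply Hlow2; tauto.
    + intros; apply mean_value_bounded_high; [tauto | tauto | lia].
Qed.

Lemma hump_primitive_at1_bounds : 0 <= hump_primitive 1 <= 1/4.
Proof.
  pose proof knot1_pos. set (a := Rmin 1 knot1).
  assert (Ha : 0 < a <= 1) by (unfold a, Rmin; destruct Rle_dec; lra).
  assert (H0 : hump_primitive a = 0) by (apply hump_primitive_low; apply Rmin_r).
  pose proof (mean_value_bounded_hump_primitive a 1 ltac:(lra) ltac:(lra) 0 (1/4)
                (fun u _ => hump_bounds _)).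
  rewrite H0 in H1. nra.
Qed.

Lemma hump_gap_vs_primitive k :
  Rabs (hump (gap d x (S k))
        - (hump_primitive (INR (S k) + 1) - hump_primitive (INR k + 1)))
  <= clamp1 (x / ((INR k + 1) * (INR k + 1)) - INR d)
     - clamp1 (x / ((INR (S k) + 1) * (INR (S k) + 1)) - INR d).
Proof.
  rewrite S_INR, gap_succ. pose proof (pos_INR k).
  set (n := INR k + 1) in *. replace (INR k + 2) with (n + 1) by (unfold n; ring).
  assert (Hn : 1 <= n) by (unfold n; lra).
  set (cl u := clamp1 (x / (u * u) - INR d)).
  set (t := x / (n * (n + 1)) - INR d).
  assert (Hq : forall a b, 0 < a <= b -> x / b <= x / a).
  { intros a b Hab. apply Rmult_le_compat_l; [lra|]. apply Rinv_le_contravar; lra. }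
  assert (Ht : cl (n + 1) <= clamp1 t <= cl n).
  { unfold cl, t. split; apply clamp1_le, Rplus_le_compat_r, Hq; nra. }
  assert (Hprof : forall u, n <= u <= n + 1 ->
            hump t - (cl n - cl (n + 1)) <= hump_profile d x u <= hump t + (cl n - cl (n + 1))).
  { intros u Hu. assert (cl (n + 1) <= cl u <= cl n)
      by (unfold cl; split; apply clamp1_le, Rplus_le_compat_r, Hq; nra).
    pose proof (hump_lipschitz (x / (u * u) - INR d) t).
    unfold hump_profile. fold (cl u) in *.
    assert (Rabs (cl u - clamp1 t) <= cl n - cl (n + 1)) by (apply Rabs_le; lra).
    pose proof (proj1 (Rabs_le_between _ _) (Rle_trans _ _ _ H1 H2)). lra. }
  pose proof (mean_value_bounded_hump_primitive n (n + 1) ltac:(lra) ltac:(lra) _ _ Hprof).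
  change (Rabs (hump t - (hump_primitive (n + 1) - hump_primitive n)) <= cl n - cl (n + 1)).
  replace (n + 1 - n) with 1 in H0 by ring. apply Rabs_le; lra.
Qed.


Lemma hump_sum_vs_primitive N :
  Rabs (sum_f_R0 (fun k => hump (gap d x (S k))) N
        - (hump_primitive (INR N + 2) - hump_primitive 1)) <= 2.
Proof.
  set (w k := hump_primitive (INR k + 1)).
  set (v k := clamp1 (x / ((INR k + 1) * (INR k + 1)) - INR d)).
  assert (Hw : sum_f_R0 (fun k => w (S k) - w k) N = w (S N) - w 0%nat).
  { rewrite (sum_eq _ (fun k => - w k - - w (S k))) by (intros; ring).
    rewrite (sum_f_R0_telescope (fun k => - w k)). ring. }
  replace (hump_primitive (INR N + 2) - hump_primitive 1) with (w (S N) - w 0%nat)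
    by (unfold w; rewrite S_INR; simpl; f_equal; f_equal; ring).
  rewrite <- Hw, <- minus_sum.
  eapply Rle_trans; [apply Rsum_abs|].
  eapply Rle_trans; [apply (sum_Rle _ (fun k => v k - v (S k))); intros k _;
                     apply hump_gap_vs_primitive|].
  rewrite sum_f_R0_telescope.
  pose proof (clamp1_bounds (x / ((INR 0 + 1) * (INR 0 + 1)) - INR d)).
  pose proof (clamp1_bounds (x / ((INR (S N) + 1) * (INR (S N) + 1)) - INR d)).
  unfold v; lra.
Qed.

(* The limit of [antider_neg 1 x] at infinity is [0]. *)
Definition hump_total : R :=
  antider_pos d x knot2 - antider_pos d x knot1
  + (if le_dec 2 d then antider_neg d x knot3 else 0) - antider_neg d x knot2.

Lemma hump_total_eq : hump_total = fconst d * sqrt x.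
Proof.
  pose proof INR_d_ge1.
  assert (Hr : 0 < sqrt x) by (apply sqrt_lt_R0; lra).
  assert (Er : sqrt x * sqrt x = x) by (apply sqrt_sqrt; lra).
  assert (S1 : 0 < sqrt (INR d + 1)) by (apply sqrt_lt_R0; lra).
  assert (S2 : 0 < sqrt (INR d)) by (apply sqrt_lt_R0; lra).
  unfold hump_total, knot1, knot2, knot3, fconst. rewrite !sqrt_div_alt by lra.
  rewrite (antider_pos_at x (sqrt x) (sqrt (INR d + 1))) by (auto; apply sqrt_sqrt; lra).
  pose proof (antider_pos_sub_neg_at x (sqrt x) (sqrt (INR d)) d Hr S2 Er
                ltac:(apply sqrt_sqrt; lra)) as E2.
  destruct le_dec as [H2|H2].
  - pose proof (INR_d_ge2 H2).
    assert (S3 : 0 < sqrt (INR d - 1)) by (apply sqrt_lt_R0; lra).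
    rewrite sqrt_div_alt by lra.
    rewrite (antider_neg_at x (sqrt x) (sqrt (INR d - 1))) by (auto; apply sqrt_sqrt; lra).
    lra.
  - replace d with 1%nat in * by lia. simpl INR in *.
    replace (1 - 1) with 0 by ring. rewrite sqrt_0. lra.
Qed.

Lemma sqrt_div_le_sqrt c : 1 <= c -> sqrt (x / c) <= sqrt x.
Proof.
  intros Hc. apply sqrt_le_1_alt. apply Rle_div_l; [lra|].
  rewrite <- (Rmult_1_r x) at 1. apply Rmult_le_compat_l; lra.
Qed.

Lemma hump_primitive_far y : x + 1 <= y -> Rabs (hump_primitive y - hump_total) <= 1.
Proof.
  intros Hy. pose proof INR_d_ge1.
  assert (Hsqrt : sqrt x <= y).
  { pose proof (sqrt_pos x). pose proof (sqrt_sqrt x ltac:(lra)). nra. }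
  assert (knot2 <= y) by (pose proof (sqrt_div_le_sqrt (INR d) H); unfold knot2; lra).
  rewrite hump_primitive_high by lra. unfold hump_total.
  destruct le_dec as [H2|H2].
  - pose proof (INR_d_ge2 H2).
    assert (knot3 <= y) by (pose proof (sqrt_div_le_sqrt (INR d - 1) ltac:(lra)); unfold knot3; lra).
    rewrite Rmin_right by lra. rewrite Rminus_diag, Rabs_R0. lra.
  - replace d with 1%nat in * by lia.
    replace (antider_pos 1 x knot2 - antider_pos 1 x knot1 + antider_neg 1 x y
             - antider_neg 1 x knot2
             - (antider_pos 1 x knot2 - antider_pos 1 x knot1 + 0 - antider_neg 1 x knot2))
      with (antider_neg 1 x y) by ring.
    apply antider_neg_1_bound; lra.
Qed.

End Primitive.

Theorem proposition6 :
  exists C : R, forall (d : nat) (x : R),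
    (1 <= d)%nat -> 0 < x ->
    Rabs (W d x - fconst d * sqrt x) <= C * INR d.
Proof.
  exists 13. intros d x Hd Hx.
  set (N := Z.to_nat (floorR x)).
  assert (HN : x + 1 <= INR N + 2).
  { pose proof (base_Int_part x) as [B1 B2].
    assert (-1 < Int_part x)%Z by (apply lt_IZR; lra).
    unfold N, floorR. rewrite INR_IZR_INZ, Z2Nat.id by lia. lra. }
  pose proof (W_sum_sub_hump_sum_bound d x N Hx) as E1.
  pose proof (hump_sum_vs_primitive d x Hd Hx N) as E2.
  pose proof (hump_primitive_at1_bounds d x Hd Hx) as E3.
  pose proof (hump_primitive_far d x Hd Hx (INR N + 2) HN) as E4.
  rewrite <- (hump_total_eq d x Hd Hx).
  change (W d x) with (sum_f_R0 (fun k => W_term d x (S k)) N).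
  pose proof (INR_d_ge1 d Hd).
  apply Rabs_le_between in E1, E2, E4. apply Rabs_le. nra.
Qed.
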